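(* There exists a $BH(19,6)$ matrix, i.e. a $19\times 19$ complex matrix $H$ all of whose entries are sixth roots of unity and which satisfies $HH^\ast=19I_{19}$.
   Context: $H^\ast$ denotes the conjugate transpose and $I_{19}$ the identity matrix of order $19$. *)

(* complex numbers are modelled by algC (algebraic complex numbers).
   No bespoke definitions needed: H^* is written (map_mx Num.conj H)^T. *)
From HB Require Import structures.
From mathcomp Require Import all_boot all_order all_algebra all_field.

From HB Require Import structures.
From mathcomp Require Import all_boot all_order all_algebra all_field.
From mathcomp Require Import ring.
Import GRing.Theory Num.Theory.
Local Open Scope ring_scope.

(* Let w be a primitive sixth root of unity and H = (w ^+ E i j) for an
   explicit 19 x 19 exponent table E.  Since w^* = w^-1 = w ^+ 5, the entry
   (i, k) of H H^* is  \sum_j w ^+ (E i j + 5 E k j).  A primitive sixth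
   root satisfies w^2 = w - 1, so every power of w is an integer combination
   a + b w with (a, b) depending only on the exponent modulo 6; hence each
   Gram entry equals A + B w for integers A, B that are computable from E. *)

Lemma conjC_unity {z : algC} {n : nat} :
  (0 < n)%N -> z ^+ n = 1 -> z^* = z ^+ n.-1.
Proof.
move=> n_gt0 zn1.
have norm_z : `|z| = 1.
  by apply/eqP; rewrite -(pexpr_eq1 n_gt0) ?normr_ge0 // -normrX zn1 normr1.
have zzn : z * z ^+ n.-1 = 1 by rewrite -exprS prednK.
by rewrite -[z^*]mulr1 -zzn mulrA -normCKC norm_z expr1n mul1r.
Qed.

Lemma prim6_sqr {R : idomainType} {w : R} :
  6.-primitive_root w -> w ^+ 2 = w - 1.
Proof.
move=> prim_w.
have w3_neq1 : w ^+ 3 - 1 != 0 by rewrite subr_eq0 -(prim_order_dvd prim_w).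
have w_neqN1 : w + 1 != 0.
  rewrite addr_eq0; apply/eqP => w_eqN1.
  by move: (prim_order_dvd prim_w 2); rewrite w_eqN1 sqrrN expr1n eqxx.
have factor6 : w ^+ 6 - 1 = (w ^+ 3 - 1) * (w + 1) * (w ^+ 2 - w + 1) by ring.
move: factor6; rewrite prim_expr_order // subrr => /esym/eqP.
rewrite !mulf_eq0 (negbTE w3_neq1) (negbTE w_neqN1) /= => /eqP quad.
by rewrite -[RHS]addr0 -quad; ring.
Qed.

(* Coordinates of w ^+ k in the basis (1, w) when w^2 = w - 1:
   w ^+ k = eis0 k + eis1 k * w, periodically in k with period 6. *)
Definition eis0 (k : nat) : int :=
  match (k %% 6)%N with 0 | 5 => 1 | 2 | 3 => -1 | _ => 0 end.
Definition eis1 (k : nat) : int :=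
  match (k %% 6)%N with 1 | 2 => 1 | 4 | 5 => -1 | _ => 0 end.

Section EisensteinPowers.
Context {R : comNzRingType} {w : R}.
Hypothesis w_sqr : w ^+ 2 = w - 1.

Lemma eis_expr6 : w ^+ 6 = 1.
Proof. by ring: w_sqr. Qed.

Lemma eis_expr (k : nat) : w ^+ k = (eis0 k)%:~R + (eis1 k)%:~R * w.
Proof.
rewrite -(expr_mod k eis_expr6) /eis0 /eis1.
case: (k %% 6)%N (ltn_pmod k (isT : (0 < 6)%N)) => [|[|[|[|[|[|r]]]]]] // _.
all: ring: w_sqr.
Qed.

End EisensteinPowers.

(* Integer sum of f over 0 <= j < n, written as a fold so that it computes. *)
Definition intsum (n : nat) (f : nat -> int) : int :=
  foldr (fun j s => f j + s) 0 (iota 0 n).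

Lemma intsumE (R : pzRingType) (n : nat) (f : nat -> int) :
  \sum_(j < n) (f j)%:~R = (intsum n f)%:~R :> R.
Proof.
rewrite -(big_mkord xpredT (fun j => (f j)%:~R)) /index_iota subn0 /intsum.
by elim: (iota 0 n) => [|j s IH]; rewrite ?big_nil ?big_cons ?IH ?intrD.
Qed.

(* Integer coordinates, in the basis (1, w), of the (i, k) entry of H H^*
   for H = (w ^+ e i j) with n columns. *)
Definition gram0 (n : nat) (e : nat -> nat -> nat) (i k : nat) : int :=
  intsum n (fun j => eis0 (e i j + 5 * e k j)).
Definition gram1 (n : nat) (e : nat -> nat -> nat) (i k : nat) : int :=
  intsum n (fun j => eis1 (e i j + 5 * e k j)).

Lemma gram_prim6 (w : algC) (m n : nat) (e : nat -> nat -> nat) :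
  6.-primitive_root w ->
  let H := \matrix_(i < m, j < n) w ^+ e i j in
  H *m (map_mx Num.conj H)^T =
    \matrix_(i, k) ((gram0 n e i k)%:~R + (gram1 n e i k)%:~R * w).
Proof.
move=> prim_w H; have w_sqr := prim6_sqr prim_w.
have conj_pow (l : nat) : (w ^+ l)^* = w ^+ (5 * l).
  rewrite mulnC exprM -(conjC_unity (ltn0Sn 5)) //.
  by rewrite -exprM mulnC exprM (prim_expr_order prim_w) expr1n.
apply/matrixP => i k; rewrite !mxE.
under eq_bigr => j _ do
  rewrite !mxE conj_pow -exprD (eis_expr w_sqr).
rewrite big_split /= -mulr_suml.
by rewrite -!intsumE.
Qed.

Definition bh19_table : seq (seq nat) := [::
  [:: 0; 0; 0; 0; 0; 0; 0; 0; 0; 0; 0; 0; 0; 0; 0; 0; 0; 0; 0];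
  [:: 0; 3; 5; 5; 3; 5; 1; 1; 1; 5; 3; 2; 3; 5; 3; 1; 1; 3; 5];
  [:: 0; 5; 3; 5; 5; 3; 5; 1; 1; 1; 5; 3; 2; 3; 5; 3; 1; 1; 3];
  [:: 0; 1; 5; 3; 5; 5; 3; 5; 1; 1; 3; 5; 3; 2; 3; 5; 3; 1; 1];
  [:: 0; 1; 1; 5; 3; 5; 5; 3; 5; 1; 1; 3; 5; 3; 2; 3; 5; 3; 1];
  [:: 0; 1; 1; 1; 5; 3; 5; 5; 3; 5; 1; 1; 3; 5; 3; 2; 3; 5; 3];
  [:: 0; 5; 1; 1; 1; 5; 3; 5; 5; 3; 3; 1; 1; 3; 5; 3; 2; 3; 5];
  [:: 0; 3; 5; 1; 1; 1; 5; 3; 5; 5; 5; 3; 1; 1; 3; 5; 3; 2; 3];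
  [:: 0; 5; 3; 5; 1; 1; 1; 5; 3; 5; 3; 5; 3; 1; 1; 3; 5; 3; 2];
  [:: 0; 5; 5; 3; 5; 1; 1; 1; 5; 3; 2; 3; 5; 3; 1; 1; 3; 5; 3];
  [:: 0; 5; 1; 3; 2; 3; 1; 5; 3; 3; 5; 3; 5; 5; 3; 5; 1; 1; 1];
  [:: 0; 3; 5; 1; 3; 2; 3; 1; 5; 3; 1; 5; 3; 5; 5; 3; 5; 1; 1];
  [:: 0; 3; 3; 5; 1; 3; 2; 3; 1; 5; 1; 1; 5; 3; 5; 5; 3; 5; 1];
  [:: 0; 5; 3; 3; 5; 1; 3; 2; 3; 1; 1; 1; 1; 5; 3; 5; 5; 3; 5];
  [:: 0; 1; 5; 3; 3; 5; 1; 3; 2; 3; 5; 1; 1; 1; 5; 3; 5; 5; 3];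
  [:: 0; 3; 1; 5; 3; 3; 5; 1; 3; 2; 3; 5; 1; 1; 1; 5; 3; 5; 5];
  [:: 0; 2; 3; 1; 5; 3; 3; 5; 1; 3; 5; 3; 5; 1; 1; 1; 5; 3; 5];
  [:: 0; 3; 2; 3; 1; 5; 3; 3; 5; 1; 5; 5; 3; 5; 1; 1; 1; 5; 3];
  [:: 0; 1; 3; 2; 3; 1; 5; 3; 3; 5; 3; 5; 5; 3; 5; 1; 1; 1; 5]].

Definition bh19_exp (i j : nat) : nat := nth 0%N (nth [::] bh19_table i) j.

Lemma bh19_gram_table :
  all (fun i => all (fun k =>
         (gram0 19 bh19_exp i k == if i == k then 19 else 0)
         && (gram1 19 bh19_exp i k == 0)) (iota 0 19)) (iota 0 19).
Proof. by vm_compute. Qed.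

Lemma bh19_gram (i k : 'I_19) :
  gram0 19 bh19_exp i k = (if i == k then 19 else 0)
  /\ gram1 19 bh19_exp i k = 0.
Proof.
move/allP/(_ i): bh19_gram_table; rewrite mem_iota ltn_ord => /(_ isT).
move/allP/(_ k); rewrite mem_iota ltn_ord => /(_ isT).
by case/andP => /eqP -> /eqP ->.
Qed.

Theorem theorem3 :
  exists H : 'M[algC]_19,
    (forall i j : 'I_19, 6.-unity_root (H i j)) /\
    H *m (map_mx Num.conj H)^T = 19%:R%:M.
Proof.
have [w prim_w] := C_prim_root_exists (ltn0Sn 5).
exists (\matrix_(i, j) w ^+ bh19_exp i j); split.
  move=> i j; rewrite mxE; apply/unity_rootP.
  by rewrite -exprM mulnC exprM (prim_expr_order prim_w) expr1n.
rewrite gram_prim6 //; apply/matrixP => i k; rewrite !mxE.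
have [-> ->] := bh19_gram i k.
by case: eqP; rewrite mul0r addr0.
Qed.
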